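(* Let $A$ be a distributive meet-complemented lattice in which $\Box x$ and $\Diamond x$ exist for every $x\in A$. Then for all $a,b\in A$: (D1) $\Diamond a\wedge\Box b\le\Diamond(a\wedge b)$ and (D2) $\Box(a\vee b)\le\Box a\vee\Diamond b$.
   Context: A meet-complemented lattice is a lattice $(L,\le)$ such that for every $a\in L$ the element $\neg a=\max\{b\in L: a\wedge b\le c\ \text{for all } c\in L\}$ exists; it is bounded with bottom $0$ and top $1$. For $a\in L$, $\Box a=\max\{b\in L: a\vee\neg b=1\}$ and $\Diamond a=\min\{b\in L: \neg a\vee b=1\}$. *)

From HB Require Import structures.
From mathcomp Require Import all_boot all_order.
Set Implicit Arguments. Unset Strict Implicit. Unset Printing Implicit Defensive.
Import Order.TTheory.
Local Open Scope order_scope.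

Definition is_max d (T : porderType d) (P : T -> Prop) (m : T) : Prop :=
  P m /\ forall b, P b -> b <= m.

Definition is_min d (T : porderType d) (P : T -> Prop) (m : T) : Prop :=
  P m /\ forall b, P b -> m <= b.

Definition meet_complement d (T : latticeType d) (neg : T -> T) : Prop :=
  forall a : T, is_max (fun b : T => forall c : T, a `&` b <= c) (neg a).

Definition is_box d (T : tbLatticeType d) (neg box : T -> T) : Prop :=
  forall a : T, is_max (fun b : T => a `|` neg b = \top) (box a).

Definition is_dia d (T : tbLatticeType d) (neg dia : T -> T) : Prop :=
  forall a : T, is_min (fun b : T => neg a `|` b = \top) (dia a).

From HB Require Import structures.
From mathcomp Require Import all_boot all_order.
Import Order.TTheory.
Local Open Scope order_scope.

Set Implicit Arguments.
Unset Strict Implicit.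

(* For (D1), meeting [neg (a `&` b) `|` dia (a `&` b) = 1]
   with [b `|` neg (box b) = 1] and using [neg (a `&` b) `&` b <= neg a] gives
   [neg a `|` dia (a `&` b) `|` neg (box b) = 1], so [dia a] lies below
   [dia (a `&` b) `|` neg (box b)]; meeting with [box b] kills the second
   summand.  For (D2), [neg b `|` dia b = 1] splits [box (a `|` b)] into a part
   below [neg b], which lies below [box a], and a part below [dia b]. *)

Lemma top_ge d (A : tbLatticeType d) (x : A) : \top <= x -> x = \top.
Proof. by move=> topx; apply/le_anti; rewrite topx lex1. Qed.

Lemma meetUU_top d (A : tbDistrLatticeType d) (u v w z : A) :
  u `|` v = \top -> w `|` z = \top -> (u `&` w) `|` (v `|` z) = \top.
Proof.
move=> uv wz; apply: top_ge; rewrite -(meetxx \top) -{1}uv -wz.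
rewrite meetUl !meetUr !leUx -!andbA; apply/and4P; split.
- exact: leUl.
- exact: le_trans (leIr _ _) (le_trans (leUr _ _) (leUr _ _)).
- exact: le_trans (leIl _ _) (le_trans (leUl _ _) (leUr _ _)).
- exact: le_trans (leIl _ _) (le_trans (leUl _ _) (leUr _ _)).
Qed.

Lemma meet_split_top d (A : tbDistrLatticeType d) (x y z : A) :
  y `|` z = \top -> x = (x `&` y) `|` (x `&` z).
Proof. by move=> yz; rewrite -meetUr yz meetx1. Qed.

Section MeetComplement.
Variables (d : Order.disp_t) (A : tbDistrLatticeType d) (neg : A -> A).
Hypothesis negP : meet_complement neg.

Lemma meetxN (x : A) : x `&` neg x = \bot.
Proof. by apply/le_anti; rewrite le0x andbT; apply: (proj1 (negP x)). Qed.

Lemma le_neg (x y : A) : x `&` y = \bot -> y <= neg x.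
Proof. by move=> xy; apply: (proj2 (negP x)) => c; rewrite xy le0x. Qed.

Lemma neg_anti (x y : A) : x <= y -> neg y <= neg x.
Proof.
move=> xy; apply: le_neg; apply/le_anti; rewrite le0x andbT.
by rewrite -(meetxN y) leI2.
Qed.

Lemma le_negK (x : A) : x <= neg (neg x).
Proof. by apply: le_neg; rewrite meetC meetxN. Qed.

Lemma negIx_meet (x y : A) : neg (x `&` y) `&` y <= neg x.
Proof. by apply: le_neg; rewrite meetCA meetC meetxN. Qed.

Variables box dia : A -> A.
Hypotheses (boxP : is_box neg box) (diaP : is_dia neg dia).

Lemma join_neg_box (a : A) : a `|` neg (box a) = \top.
Proof. exact: (proj1 (boxP a)). Qed.

Lemma box_max (a y : A) : a `|` neg y = \top -> y <= box a.
Proof. exact: (proj2 (boxP a)). Qed.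

Lemma join_neg_dia (a : A) : neg a `|` dia a = \top.
Proof. exact: (proj1 (diaP a)). Qed.

Lemma dia_min (a y : A) : neg a `|` y = \top -> dia a <= y.
Proof. exact: (proj2 (diaP a)). Qed.

Lemma dia_meet_box (a b : A) : dia a `&` box b <= dia (a `&` b).
Proof.
have dia_le : dia a <= dia (a `&` b) `|` neg (box b).
  apply: dia_min; apply: top_ge.
  rewrite -(meetUU_top (join_neg_dia (a `&` b)) (join_neg_box b)).
  by rewrite leU2 ?negIx_meet.
apply: le_trans (leI2 dia_le (lexx (box b))) _.
by rewrite meetUl leUx leIl /= meetC meetxN le0x.
Qed.

Lemma box_join (a b : A) : box (a `|` b) <= box a `|` dia b.
Proof.
set c := box (a `|` b).
have box_part : c `&` neg b <= box a.
  apply: box_max; apply: top_ge; rewrite -(join_neg_box (a `|` b)) -joinA.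
  rewrite leU2 // leUx; apply/andP; split.
  - exact: le_trans (le_negK b) (neg_anti (leIr _ _)).
  - exact: neg_anti (leIl _ _).
rewrite {1}(meet_split_top c (join_neg_dia b)).
exact: leU2 box_part (leIr _ _).
Qed.

End MeetComplement.

Theorem proposition15 (d : Order.disp_t) (A : tbDistrLatticeType d)
  (neg box dia : A -> A) :
  meet_complement neg -> is_box neg box -> is_dia neg dia ->
  forall a b : A,
    dia a `&` box b <= dia (a `&` b) /\
    box (a `|` b) <= box a `|` dia b.
Proof.
move=> negP boxP diaP a b; split.
- exact: (dia_meet_box negP boxP diaP).
- exact: (box_join negP boxP diaP).
Qed.
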